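(* For the SVIQS system, if $R_0>1$ then the disease is uniformly persistent: there exists a constant $\varepsilon>0$ such that every solution whose initial data satisfy $S_k(0),V_k(0),I_k(0),Q_k(0)\ge0$, $S_k(0)+V_k(0)+I_k(0)+Q_k(0)=N_k^*$ for all $k$, and $I(0)=\sum_{k=1}^np(k)I_k(0)>0$, satisfies $\liminf_{t\to\infty}I(t)\ge\varepsilon$, where $I(t)=\sum_{k=1}^np(k)I_k(t)$.
   Context: Fix an integer $n\ge1$ and numbers $p(1),\dots,p(n)>0$ with $\sum_{k=1}^n p(k)=1$; set $\langle k\rangle=\sum_{k=1}^n kp(k)$. Fix constants $b>d>0$ and let $\Phi^*>0$ satisfy $\Phi^*=\frac{1}{\langle k\rangle}\sum_{i=1}^n \frac{i\,p(i)\,b\Phi^*}{d+bi\Phi^*}$. For $k=1,\dots,n$ put $N_k^*=\frac{bk\Phi^*}{d+bk\Phi^*}\in(0,1)$ and $\Lambda_k=bk(1-N_k^* )\Phi^*$ (so $\Lambda_k=dN_k^*>0$). Parameters: $\lambda(k)>0$, $\varphi(k)>0$, $\mu_k>0$ for $k=1,\dots,n$; constants $\beta,\gamma,\eta,\omega>0$ and $\delta\in[0,1]$. For functions $I_1(t),\dots,I_n(t)$ set $\Theta(t)=\frac{1}{\langle k\rangle}\sum_{i=1}^n\varphi(i)p(i)I_i(t)$. The SVIQS system is, for $k=1,\dots,n$: $S_k'=\Lambda_k-\lambda(k)S_k\Theta+\gamma I_k+\eta Q_k+\omega V_k-(\mu_k+d)S_k$, $V_k'=\mu_kS_k-\delta\lambda(k)V_k\Theta-(d+\omega)V_k$,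 $I_k'=\lambda(k)S_k\Theta+\delta\lambda(k)V_k\Theta-(\gamma+\beta+d)I_k$, $Q_k'=\beta I_k-(\eta+d)Q_k$. Its basic reproduction number is $R_0=\frac{1}{\langle k\rangle}\sum_{i=1}^n\frac{\lambda(i)\varphi(i)p(i)\Lambda_i(\omega+d+\delta\mu_i)}{d(\gamma+\beta+d)(\omega+\mu_i+d)}$. *)

From Stdlib Require Import Reals.
Open Scope R_scope.

Fixpoint sumk (n : nat) (f : nat -> R) : R :=
  match n with
  | O => 0
  | S m => sumk m f + f (S m)
  end.

Definition avgk (n : nat) (p : nat -> R) : R := sumk n (fun k => INR k * p k).

Definition Nstar (b d Phis : R) (k : nat) : R :=
  b * INR k * Phis / (d + b * INR k * Phis).

Definition Lam (b d Phis : R) (k : nat) : R :=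
  b * INR k * (1 - Nstar b d Phis k) * Phis.

Definition Theta (n : nat) (p phi : nat -> R) (I : nat -> R -> R) (t : R) : R :=
  / avgk n p * sumk n (fun i => phi i * p i * I i t).

Definition R0_SVIQS (n : nat) (p lam phi mu : nat -> R) (b d Phis beta gamma omega delta : R) : R :=
  / avgk n p *
  sumk n (fun i => lam i * phi i * p i * Lam b d Phis i * (omega + d + delta * mu i)
                   / (d * (gamma + beta + d) * (omega + mu i + d))).

Definition right_cont0 (f : R -> R) : Prop :=
  forall e, 0 < e -> exists dl, 0 < dl /\
    forall t, 0 <= t < dl -> Rabs (f t - f 0) < e.

Definition is_SVIQS_solution (n : nat) (p lam phi mu : nat -> R)
  (b d Phis beta gamma eta omega delta : R) (S V I Q : nat -> R -> R) : Prop :=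
  forall k, (1 <= k <= n)%nat ->
    right_cont0 (S k) /\ right_cont0 (V k) /\ right_cont0 (I k) /\ right_cont0 (Q k) /\
    forall t, 0 < t ->
      derivable_pt_lim (S k) t
        (Lam b d Phis k - lam k * S k t * Theta n p phi I t + gamma * I k t
         + eta * Q k t + omega * V k t - (mu k + d) * S k t) /\
      derivable_pt_lim (V k) t
        (mu k * S k t - delta * lam k * V k t * Theta n p phi I t - (d + omega) * V k t) /\
      derivable_pt_lim (I k) t
        (lam k * S k t * Theta n p phi I t + delta * lam k * V k t * Theta n p phi I t
         - (gamma + beta + d) * I k t) /\
      derivable_pt_lim (Q k) t (beta * I k t - (eta + d) * Q k t).

Definition Itot (n : nat) (p : nat -> R) (I : nat -> R -> R) (t : R) : R :=
  sumk n (fun k => p k * I k t).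

(* Along solutions, the total population of each degree class is conserved and the
   compartments stay nonnegative.  The weighted infection level [Theta] then satisfies
   [Theta' = Theta (F - c)], where [c = gamma + beta + d] and [F] is a weighted sum of the
   [S_k + delta V_k]; at the disease-free equilibrium [F] equals [c R0 > c].  While [Theta]
   stays below a small level [eta0], after a transient the classes [I_k], [Q_k] and the
   excess of [V_k] over its equilibrium value are small, so [F >= c + alpha] and [Theta]
   doubles over a window of fixed length [L].  Hence [Theta] reaches [eta0], and afterwards
   it never falls below [eta0 * exp (- c * L)]; finally [I(t)] dominates a fixed multiple
   of [Theta(t)]. *)

From Stdlib Require Import Reals Lra Lia List Classical.
Import ListNotations.
Open Scope R_scope.

(** * Finite sums over degree classes *)

Lemma sumk_ext n f g :
  (forall k, (1 <= k <= n)%nat -> f k = g k) -> sumk n f = sumk n g.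
Proof.
  induction n as [|n IH]; intros H; simpl; [reflexivity|].
  rewrite IH, H; [reflexivity | lia | intros k Hk; apply H; lia].
Qed.

Lemma sumk_add n f g : sumk n (fun k => f k + g k) = sumk n f + sumk n g.
Proof. induction n as [|n IH]; simpl; [lra | rewrite IH; lra]. Qed.

Lemma sumk_scal n a f : sumk n (fun k => a * f k) = a * sumk n f.
Proof. induction n as [|n IH]; simpl; [lra | rewrite IH; lra]. Qed.

Lemma sumk_le n f g :
  (forall k, (1 <= k <= n)%nat -> f k <= g k) -> sumk n f <= sumk n g.
Proof.
  induction n as [|n IH]; intros H; simpl; [lra|].
  assert (sumk n f <= sumk n g) by (apply IH; intros; apply H; lia).
  assert (f (S n) <= g (S n)) by (apply H; lia).
  lra.
Qed.

Lemma sumk_const0 n : sumk n (fun _ => 0) = 0.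
Proof. induction n as [|n IH]; simpl; [reflexivity | rewrite IH; lra]. Qed.

Lemma sumk_nonneg n f : (forall k, (1 <= k <= n)%nat -> 0 <= f k) -> 0 <= sumk n f.
Proof. intros H. rewrite <- (sumk_const0 n). apply sumk_le, H. Qed.

Lemma sumk_term_le n f j :
  (forall k, (1 <= k <= n)%nat -> 0 <= f k) -> (1 <= j <= n)%nat -> f j <= sumk n f.
Proof.
  induction n as [|n IH]; intros H Hj; [lia|]. simpl.
  assert (0 <= f (S n)) by (apply H; lia).
  destruct (Nat.eq_dec j (S n)) as [->|Hne].
  - assert (0 <= sumk n f) by (apply sumk_nonneg; intros; apply H; lia). lra.
  - assert (f j <= sumk n f) by (apply IH; [intros; apply H | ]; lia). lra.
Qed.

Lemma sumk_pos n f :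
  (1 <= n)%nat -> (forall k, (1 <= k <= n)%nat -> 0 < f k) -> 0 < sumk n f.
Proof.
  intros Hn H. apply Rlt_le_trans with (f 1%nat); [apply H; lia|].
  apply sumk_term_le; [intros; apply Rlt_le, H|]; lia.
Qed.

Lemma sumk_pos_term n f : 0 < sumk n f -> exists k, (1 <= k <= n)%nat /\ 0 < f k.
Proof.
  induction n as [|n IH]; simpl; intros H; [lra|].
  destruct (Rlt_or_le 0 (f (S n))) as [Hf|Hf]; [exists (S n); split; [lia | exact Hf]|].
  destruct IH as [k [Hk Hfk]]; [lra|]. exists k. split; [lia | exact Hfk].
Qed.

Lemma derivable_pt_lim_sumk n (f f' : nat -> R -> R) t :
  (forall k, (1 <= k <= n)%nat -> derivable_pt_lim (f k) t (f' k t)) ->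
  derivable_pt_lim (fun s => sumk n (fun k => f k s)) t (sumk n (fun k => f' k t)).
Proof.
  induction n as [|n IH]; intros H; simpl.
  - apply derivable_pt_lim_const.
  - apply (derivable_pt_lim_plus (fun s => sumk n (fun k => f k s)) (f (S n)));
      [apply IH; intros; apply H | apply H]; lia.
Qed.

(** * Continuity on intervals and differential inequalities *)

Definition cont_on (g : R -> R) (a b : R) : Prop :=
  forall c, a <= c <= b -> continue_in g (fun u => a <= u <= b) c.

Lemma cont_on_eps g a b c e :
  cont_on g a b -> a <= c <= b -> 0 < e ->
  exists dl, 0 < dl /\ forall u, a <= u <= b -> Rabs (u - c) < dl -> Rabs (g u - g c) < e.
Proof.
  intros Hg Hc He. destruct (Hg c Hc e He) as [dl [Hdl H]].
  exists dl. split; [exact Hdl|]. intros u Hu Huc.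
  destruct (Req_dec u c) as [->|Hne].
  - unfold Rminus. rewrite Rplus_opp_r, Rabs_R0. exact He.
  - apply (H u). split; [split; auto|exact Huc].
Qed.

Lemma cont_on_intro g a b :
  (forall c, a <= c <= b -> forall e, 0 < e ->
     exists dl, 0 < dl /\ forall u, a <= u <= b -> Rabs (u - c) < dl -> Rabs (g u - g c) < e) ->
  cont_on g a b.
Proof.
  intros H c Hc e He. destruct (H c Hc e He) as [dl [Hdl Hd]].
  exists dl. split; [exact Hdl|]. intros u [[Hu _] Huc]. exact (Hd u Hu Huc).
Qed.

Lemma cont_on_const k a b : cont_on (fun _ => k) a b.
Proof. intros c _. apply (limit_free (fun _ => k) _ c c). Qed.

Lemma cont_on_plus f g a b :
  cont_on f a b -> cont_on g a b -> cont_on (fun t => f t + g t) a b.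
Proof. intros Hf Hg c Hc. apply limit_plus; [apply Hf | apply Hg]; exact Hc. Qed.

Lemma cont_on_mult f g a b :
  cont_on f a b -> cont_on g a b -> cont_on (fun t => f t * g t) a b.
Proof. intros Hf Hg c Hc. apply limit_mul; [apply Hf | apply Hg]; exact Hc. Qed.

Lemma cont_on_opp f a b : cont_on f a b -> cont_on (fun t => - f t) a b.
Proof. intros Hf c Hc. apply limit_Ropp, Hf, Hc. Qed.

Lemma cont_on_subinterval f a b a' b' :
  cont_on f a b -> a <= a' -> b' <= b -> cont_on f a' b'.
Proof.
  intros Hf Ha Hb c Hc. apply (limit1_imp f (D_x (fun u => a <= u <= b) c)).
  - intros u [Hu Hne]. split; [lra | exact Hne].
  - apply Hf. lra.
Qed.

Lemma continue_in_derivable f D c l : derivable_pt_lim f c l -> continue_in f D c.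
Proof.
  intros Hl. apply (limit1_imp f (D_x no_cond c)).
  - intros u [_ Hne]. split; [exact I | exact Hne].
  - exact (derivable_continuous_pt f c (exist _ l Hl)).
Qed.

Lemma cont_on_derivable f a b :
  (forall c, a <= c <= b -> exists l, derivable_pt_lim f c l) -> cont_on f a b.
Proof.
  intros H c Hc. destruct (H c Hc) as [l Hl]. exact (continue_in_derivable f _ c l Hl).
Qed.

Lemma cont_on_of_right_cont0 f a b :
  0 <= a -> right_cont0 f -> (forall c, 0 < c -> exists l, derivable_pt_lim f c l) ->
  cont_on f a b.
Proof.
  intros Ha Hr Hd c Hc. destruct (Req_dec c 0) as [->|Hc0].
  - intros e He. destruct (Hr e He) as [dl [Hdl H]]. exists dl. split; [exact Hdl|].
    intros u [[Hu _] Hud]. apply H. simpl in Hud. unfold R_dist in Hud.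
    rewrite Rminus_0_r, Rabs_right in Hud; lra.
  - destruct (Hd c) as [l Hl]; [lra|]. exact (continue_in_derivable f _ c l Hl).
Qed.

Lemma Rmin_dist x y x' y' :
  Rabs (Rmin x y - Rmin x' y') <= Rmax (Rabs (x - x')) (Rabs (y - y')).
Proof.
  unfold Rmin, Rmax, Rabs. repeat destruct Rle_dec; repeat destruct Rcase_abs; lra.
Qed.

Lemma cont_on_min f g a b :
  cont_on f a b -> cont_on g a b -> cont_on (fun t => Rmin (f t) (g t)) a b.
Proof.
  intros Hf Hg. apply cont_on_intro. intros c Hc e He.
  destruct (cont_on_eps f a b c e Hf Hc He) as [d1 [Hd1 H1]].
  destruct (cont_on_eps g a b c e Hg Hc He) as [d2 [Hd2 H2]].
  exists (Rmin d1 d2). split; [apply Rmin_glb_lt; assumption|].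
  intros u Hu Huc. pose proof (Rmin_l d1 d2). pose proof (Rmin_r d1 d2).
  eapply Rle_lt_trans; [apply Rmin_dist|].
  unfold Rmax. destruct Rle_dec; [apply H2 | apply H1]; auto; lra.
Qed.

Lemma cont_on_sumk n (f : nat -> R -> R) a b :
  (forall k, (1 <= k <= n)%nat -> cont_on (f k) a b) ->
  cont_on (fun t => sumk n (fun k => f k t)) a b.
Proof.
  induction n as [|n IH]; intros H; simpl; [apply cont_on_const|].
  apply (cont_on_plus (fun t => sumk n (fun k => f k t)) (f (S n)));
    [apply IH; intros; apply H | apply H]; lia.
Qed.

Lemma derivable_pt_lim_exp_scal r s : derivable_pt_lim (fun u => exp (r * u)) s (r * exp (r * s)).
Proof.
  rewrite Rmult_comm.
  apply (derivable_pt_lim_comp (fun u => r * u) exp s r (exp (r * s))).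
  - pose proof (derivable_pt_lim_scal id r s 1 (derivable_pt_lim_id s)) as H.
    rewrite Rmult_1_r in H. exact H.
  - apply derivable_pt_lim_exp.
Qed.

Lemma exp_le x y : x <= y -> exp x <= exp y.
Proof.
  intros H. destruct (Req_dec x y) as [->|Hne]; [lra|]. apply Rlt_le, exp_increasing. lra.
Qed.

(* The hypotheses only concern [a, b] with the left endpoint reached by continuity,
   so that [a = 0] is allowed for functions that are differentiable only on (0, +oo). *)
Lemma nonincreasing_on h dh a b :
  a <= b -> cont_on h a b ->
  (forall c, a < c <= b -> derivable_pt_lim h c (dh c)) ->
  (forall c, a < c <= b -> dh c <= 0) -> h b <= h a.
Proof.
  intros Hab Hc Hd Hn.
  assert (Hright : forall s, a < s <= b -> h b <= h s).
  { intros s Hs. destruct (Req_dec s b) as [->|Hsb]; [lra|].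
    destruct (MVT_cor2 h dh s b) as [c [E Hcsb]]; [lra | intros; apply Hd; lra |].
    assert (dh c <= 0) by (apply Hn; lra). nra. }
  destruct (Req_dec a b) as [->|Hne]; [lra|].
  apply Rnot_lt_le. intros Hlt.
  destruct (cont_on_eps h a b a (h b - h a) Hc ltac:(lra) ltac:(lra)) as [dl [Hdl H]].
  set (s := a + Rmin (dl / 2) (b - a)).
  assert (0 < Rmin (dl / 2) (b - a)) by (apply Rmin_glb_lt; lra).
  pose proof (Rmin_l (dl / 2) (b - a)). pose proof (Rmin_r (dl / 2) (b - a)).
  assert (Hs : Rabs (h s - h a) < h b - h a).
  { apply H; unfold s; [lra|]. rewrite Rabs_right; lra. }
  apply Rabs_def2 in Hs. pose proof (Hright s ltac:(unfold s; lra)). lra.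
Qed.

Lemma ode_upper_bound x dx r xs a t :
  a <= t -> cont_on x a t ->
  (forall c, a < c <= t -> derivable_pt_lim x c (dx c)) ->
  (forall c, a < c <= t -> dx c <= r * (xs - x c)) ->
  x t <= xs + (x a - xs) * exp (- r * (t - a)).
Proof.
  intros Hat Hc Hd Hb.
  set (h := fun s => (x s - xs) * exp (r * s)).
  assert (Hh : h t <= h a).
  { apply (nonincreasing_on h (fun s => dx s * exp (r * s) + (x s - xs) * (r * exp (r * s)))).
    - exact Hat.
    - apply cont_on_mult.
      + apply (cont_on_plus x (fun _ => - xs)); [exact Hc | apply cont_on_const].
      + apply cont_on_derivable. intros. eexists. apply derivable_pt_lim_exp_scal.
    - intros c Hc'. apply (derivable_pt_lim_mult (fun s => x s - xs) (fun s => exp (r * s))).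
      + rewrite <- (Rminus_0_r (dx c)). apply derivable_pt_lim_minus;
          [apply Hd, Hc' | apply derivable_pt_lim_const].
      + apply derivable_pt_lim_exp_scal.
    - intros c Hc'. specialize (Hb c Hc'). pose proof (exp_pos (r * c)). nra. }
  unfold h in Hh.
  assert (E : exp (- r * (t - a)) = exp (r * a) / exp (r * t)).
  { unfold Rdiv. rewrite <- exp_Ropp, <- exp_plus. f_equal. ring. }
  rewrite E. pose proof (exp_pos (r * t)). pose proof (exp_pos (r * a)).
  apply (Rmult_le_reg_r (exp (r * t))); [assumption|].
  replace ((xs + (x a - xs) * (exp (r * a) / exp (r * t))) * exp (r * t))
    with (xs * exp (r * t) + (x a - xs) * exp (r * a)) by (field; lra).
  lra.
Qed.

Lemma ode_lower_bound x dx r xs a t :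
  a <= t -> cont_on x a t ->
  (forall c, a < c <= t -> derivable_pt_lim x c (dx c)) ->
  (forall c, a < c <= t -> r * (xs - x c) <= dx c) ->
  xs + (x a - xs) * exp (- r * (t - a)) <= x t.
Proof.
  intros Hat Hc Hd Hb.
  pose proof (ode_upper_bound (fun s => - x s) (fun s => - dx s) r (- xs) a t Hat
    (cont_on_opp x a t Hc)
    (fun c Hc' => derivable_pt_lim_opp x c (dx c) (Hd c Hc'))
    (fun c Hc' => ltac:(specialize (Hb c Hc'); simpl; lra))) as Hneg.
  simpl in Hneg. lra.
Qed.

Lemma ode_upper_bound_after x dx r r0 xs a t tau eps M :
  0 < r0 <= r -> 0 <= tau -> a + tau <= t -> exp (- r0 * tau) <= eps ->
  x a - xs <= M -> 0 <= M -> cont_on x a t ->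
  (forall c, a < c <= t -> derivable_pt_lim x c (dx c)) ->
  (forall c, a < c <= t -> dx c <= r * (xs - x c)) ->
  x t <= xs + M * eps.
Proof.
  intros Hr Htau Ht Heps HM HM0 Hc Hd Hb.
  pose proof (ode_upper_bound x dx r xs a t ltac:(lra) Hc Hd Hb).
  assert (exp (- r * (t - a)) <= exp (- r0 * tau)) by (apply exp_le; nra).
  pose proof (exp_pos (- r * (t - a))).
  assert ((x a - xs) * exp (- r * (t - a)) <= M * exp (- r * (t - a))) by
    (apply Rmult_le_compat_r; lra).
  assert (M * exp (- r * (t - a)) <= M * eps) by (apply Rmult_le_compat_l; lra).
  lra.
Qed.

Lemma last_crossing g a b eta :
  a < b -> cont_on g a b -> eta <= g a -> g b < eta ->
  exists s, a <= s < b /\ g s = eta /\ forall u, s < u <= b -> g u < eta.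
Proof.
  intros Hab Hc Ha Hb.
  set (E := fun u => a <= u <= b /\ eta <= g u).
  destruct (completeness E) as [s [Hub Hlub]].
  { exists b. intros u [Hu _]. lra. }
  { exists a. split; [lra | exact Ha]. }
  assert (Has : a <= s) by (apply Hub; split; [lra | exact Ha]).
  assert (Hsb : s <= b) by (apply Hlub; intros u [Hu _]; lra).
  assert (Hafter : forall u, s < u <= b -> g u < eta).
  { intros u Hu. apply Rnot_le_lt. intros Hge.
    assert (u <= s) by (apply Hub; split; [lra | exact Hge]). lra. }
  assert (Hge : eta <= g s).
  { apply Rnot_lt_le. intros Hlt.
    destruct (cont_on_eps g a b s (eta - g s) Hc ltac:(lra) ltac:(lra)) as [dl [Hdl Hd]].
    assert (Hgap : forall u, E u -> u <= s - dl).
    { intros u [Hu Hgu]. apply Rnot_lt_le. intros Hu'.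
      assert (u <= s) by (apply Hub; split; assumption).
      assert (Hclose : Rabs (g u - g s) < eta - g s) by (apply Hd; [|rewrite Rabs_left1]; lra).
      apply Rabs_def2 in Hclose. lra. }
    assert (s <= s - dl) by (apply Hlub; exact Hgap). lra. }
  assert (Hsb' : s < b) by (destruct (Req_dec s b) as [->|]; lra).
  exists s. split; [lra|]. split; [|exact Hafter].
  apply Rle_antisym; [|exact Hge]. apply Rnot_lt_le. intros Hgt.
  destruct (cont_on_eps g a b s (g s - eta) Hc ltac:(lra) ltac:(lra)) as [dl [Hdl Hd]].
  set (u := s + Rmin (dl / 2) ((b - s) / 2)).
  assert (0 < Rmin (dl / 2) ((b - s) / 2)) by (apply Rmin_glb_lt; lra).
  pose proof (Rmin_l (dl / 2) ((b - s) / 2)). pose proof (Rmin_r (dl / 2) ((b - s) / 2)).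
  assert (g u < eta) by (apply Hafter; unfold u; lra).
  assert (Hclose : Rabs (g u - g s) < g s - eta) by (apply Hd; unfold u; [|rewrite Rabs_right]; lra).
  apply Rabs_def2 in Hclose. lra.
Qed.

(* Obtained from [last_crossing] through the reflection [u |-> - G (- u)]. *)
Lemma first_zero G a b :
  a < b -> cont_on G a b -> 0 < G a -> G b <= 0 ->
  exists tau, a < tau <= b /\ G tau = 0 /\ forall s, a <= s < tau -> 0 < G s.
Proof.
  intros Hab Hc Ha Hb.
  set (h := fun u => - G (- u)).
  assert (Hch : cont_on h (- b) (- a)).
  { apply cont_on_intro. intros c Hc' e He.
    destruct (cont_on_eps G a b (- c) e Hc ltac:(lra) He) as [dl [Hdl Hd]].
    exists dl. split; [exact Hdl|]. intros u Hu Huc. unfold h.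
    replace (- G (- u) - - G (- c)) with (- (G (- u) - G (- c))) by ring.
    rewrite Rabs_Ropp. apply Hd; [lra|].
    replace (- u - - c) with (- (u - c)) by ring. rewrite Rabs_Ropp. exact Huc. }
  destruct (last_crossing h (- b) (- a) 0) as [s [Hs [Hhs Hafter]]];
    [lra | exact Hch | unfold h; rewrite Ropp_involutive; lra
     | unfold h; rewrite Ropp_involutive; lra |].
  exists (- s). unfold h in Hhs, Hafter. split; [lra|]. split; [lra|].
  intros s' Hs'. specialize (Hafter (- s') ltac:(lra)).
  rewrite Ropp_involutive in Hafter. lra.
Qed.

Lemma derive_nonpos_at_first_zero f tau l a :
  a < tau -> derivable_pt_lim f tau l -> f tau = 0 ->
  (forall s, a <= s < tau -> 0 < f s) -> l <= 0.
Proof.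
  intros Ha Hd Hf Hs. apply Rnot_lt_le. intros Hl.
  destruct (Hd (l / 2)) as [dl Hdl]; [lra|]. pose proof (cond_pos dl).
  set (h := - Rmin (dl / 2) ((tau - a) / 2)).
  assert (0 < Rmin (dl / 2) ((tau - a) / 2)) by (apply Rmin_glb_lt; lra).
  pose proof (Rmin_l (dl / 2) ((tau - a) / 2)). pose proof (Rmin_r (dl / 2) ((tau - a) / 2)).
  specialize (Hdl h ltac:(unfold h; lra) ltac:(unfold h; rewrite Rabs_left; lra)).
  assert (0 < f (tau + h)) by (apply Hs; unfold h; lra).
  rewrite Hf in Hdl. apply Rabs_def2 in Hdl.
  assert (h < 0) by (unfold h; lra).
  assert ((f (tau + h) - 0) / h < 0).
  { unfold Rdiv. assert (/ h < 0) by (apply Rinv_lt_0_compat; lra). nra. }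
  lra.
Qed.

(** * Invariance of the nonnegative orthant *)

(* The empty family gets the arbitrary positive value [1]. *)
Fixpoint lmin (fs : list (R -> R)) (u : R) : R :=
  match fs with
  | [] => 1
  | f :: fs => Rmin (f u) (lmin fs u)
  end.

Lemma lmin_le f fs u : In f fs -> lmin fs u <= f u.
Proof.
  induction fs as [|g fs IH]; simpl; [tauto|].
  intros [->|Hin]; [apply Rmin_l|]. eapply Rle_trans; [apply Rmin_r | apply IH, Hin].
Qed.

Lemma lmin_cases fs u : lmin fs u = 1 \/ exists f, In f fs /\ lmin fs u = f u.
Proof.
  induction fs as [|g fs IH]; simpl; [left; reflexivity|].
  unfold Rmin. destruct Rle_dec; [right; exists g; auto|].
  destruct IH as [E|[f [Hin E]]]; [left | right; exists f]; auto.
Qed.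

Lemma cont_on_lmin fs a b : (forall f, In f fs -> cont_on f a b) -> cont_on (lmin fs) a b.
Proof.
  induction fs as [|g fs IH]; intros H; simpl; [apply cont_on_const|].
  apply (cont_on_min g (lmin fs)); [apply H | apply IH; intros; apply H]; simpl; auto.
Qed.

Lemma nonneg_of_perturbation x E e0 :
  0 < E -> 0 < e0 -> (forall eps, 0 < eps <= e0 -> 0 < x + eps * E) -> 0 <= x.
Proof.
  intros HE He0 H. apply Rnot_lt_le. intros Hx.
  set (eps := Rmin e0 (- x / (2 * E))).
  assert (Hq : 0 < - x / (2 * E)) by (apply Rdiv_lt_0_compat; lra).
  assert (Heps : 0 < eps <= e0) by (split; [apply Rmin_glb_lt; lra | apply Rmin_l]).
  assert (Hle : eps * E <= - x / (2 * E) * E) by (apply Rmult_le_compat_r; [lra | apply Rmin_r]).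
  replace (- x / (2 * E) * E) with (- x / 2) in Hle by (field; lra).
  specialize (H eps Heps). lra.
Qed.

Section Invariance.

Variables (xs : list (R -> R)) (K T : R).
Hypothesis HK : 0 <= K.
Hypothesis Hcont : forall f, In f xs -> cont_on f 0 T.
Hypothesis Hinit : forall f, In f xs -> 0 <= f 0.
Hypothesis Hquasi : forall f t e, In f xs -> 0 < t <= T -> 0 < e <= 1 ->
  (forall g, In g xs -> - e <= g t) -> f t = - e ->
  exists l, derivable_pt_lim f t l /\ - (K * e) < l.

Let shift eps := map (fun f u => f u + eps * exp (K * u)) xs.

Lemma in_shift eps h : In h (shift eps) ->
  exists f, In f xs /\ h = fun u => f u + eps * exp (K * u).
Proof. intros Hh. apply in_map_iff in Hh as [f [<- Hf]]. exists f. auto. Qed.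

Lemma cont_on_lmin_shift eps u : 0 <= u <= T -> cont_on (lmin (shift eps)) 0 u.
Proof.
  intros Hu. apply cont_on_lmin. intros h Hh. destruct (in_shift eps h Hh) as [f [Hf ->]].
  apply (cont_on_plus f (fun u => eps * exp (K * u))).
  - apply (cont_on_subinterval f 0 T); [apply Hcont, Hf | lra | lra].
  - apply cont_on_derivable. intros. eexists.
    apply (derivable_pt_lim_scal (fun u => exp (K * u))), derivable_pt_lim_exp_scal.
Qed.

Lemma lmin_shift_pos_at_0 eps : 0 < eps -> 0 < lmin (shift eps) 0.
Proof.
  intros Heps. destruct (lmin_cases (shift eps) 0) as [->|[h [Hh ->]]]; [lra|].
  destruct (in_shift eps h Hh) as [f [Hf ->]].
  rewrite Rmult_0_r, exp_0. specialize (Hinit f Hf). lra.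
Qed.

(* At a first zero of the perturbed minimum, the derivative of the minimizing member
   would be both [> 0] (by [Hquasi] and the perturbation) and [<= 0]. *)
Lemma lmin_shift_pos eps u : 0 < eps <= exp (- K * T) -> 0 <= u <= T ->
  0 < lmin (shift eps) u.
Proof.
  intros Heps Hu. apply Rnot_le_lt. intros Hle.
  pose proof (lmin_shift_pos_at_0 eps (proj1 Heps)) as HG0.
  assert (Hu0 : 0 < u) by (destruct (Req_dec u 0) as [->|]; lra).
  destruct (first_zero (lmin (shift eps)) 0 u Hu0 (cont_on_lmin_shift eps u Hu) HG0 Hle)
    as [tau [Htau [HGt Hbef]]].
  destruct (lmin_cases (shift eps) tau) as [E|[h [Hh Hht]]]; [lra|].
  destruct (in_shift eps h Hh) as [f [Hf ->]]. simpl in Hht.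
  set (e := eps * exp (K * tau)).
  assert (He : 0 < e <= 1).
  { split; [apply Rmult_lt_0_compat; [lra | apply exp_pos]|].
    pose proof (exp_pos (K * tau)).
    apply Rle_trans with (exp (- K * T) * exp (K * tau)); [apply Rmult_le_compat_r; lra|].
    rewrite <- exp_plus, <- exp_0. apply exp_le. nra. }
  assert (Hall : forall g, In g xs -> - e <= g tau).
  { intros g Hg.
    pose proof (lmin_le (fun u => g u + eps * exp (K * u)) (shift eps) tau
                  (in_map _ _ _ Hg)) as Hmin.
    unfold e. simpl in Hmin. lra. }
  destruct (Hquasi f tau e Hf ltac:(lra) He Hall ltac:(unfold e; lra)) as [l [Hl Hlb]].
  assert (Hder : derivable_pt_lim (fun u => f u + eps * exp (K * u)) tau (l + K * e)).
  { unfold e. replace (K * (eps * exp (K * tau))) with (eps * (K * exp (K * tau))) by ring.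
    apply (derivable_pt_lim_plus f (fun u => eps * exp (K * u))); [exact Hl|].
    apply (derivable_pt_lim_scal (fun u => exp (K * u))), derivable_pt_lim_exp_scal. }
  assert (l + K * e <= 0); [|lra].
  apply (derive_nonpos_at_first_zero _ tau _ 0 ltac:(lra) Hder); [lra|].
  intros s Hs. eapply Rlt_le_trans; [apply (Hbef s Hs)|].
  apply (lmin_le (fun u => f u + eps * exp (K * u))), Hh.
Qed.

Lemma nonneg_invariant : 0 <= T -> forall f, In f xs -> 0 <= f T.
Proof.
  intros HT f Hf.
  apply (nonneg_of_perturbation (f T) (exp (K * T)) (exp (- K * T)) (exp_pos _) (exp_pos _)).
  intros eps Heps. eapply Rlt_le_trans; [apply (lmin_shift_pos eps T Heps ltac:(lra))|].
  apply (lmin_le (fun u => f u + eps * exp (K * u))), in_map_iff. exists f. auto.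
Qed.

End Invariance.

(** * Persistence of a quantity that doubles below a threshold *)

Lemma exp_small r e : 0 < r -> 0 < e -> exists tau, 0 < tau /\ exp (- r * tau) <= e.
Proof.
  intros Hr He. exists (/ (r * e)). split; [apply Rinv_0_lt_compat; nra|].
  pose proof (exp_ineq1_le (r * / (r * e))) as Hexp.
  replace (r * / (r * e)) with (/ e) in Hexp by (field; lra).
  replace (- r * / (r * e)) with (- / e) by (field; lra).
  rewrite exp_Ropp. pose proof (Rinv_0_lt_compat e He).
  rewrite <- (Rinv_inv e) at 2. apply Rinv_le_contravar; lra.
Qed.

Lemma pow2_unbounded x y : 0 < x -> exists j : nat, y < 2 ^ j * x.
Proof.
  intros Hx. destruct (INR_archimed x y Hx) as [j Hj]. exists j.
  pose proof (poly j 1 Rlt_0_1) as Hpow. replace (1 + 1) with 2 in Hpow by ring. nra.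
Qed.

Lemma reach_of_window_doubling g eta L :
  0 < L -> 0 < g 0 ->
  (forall s, 0 <= s -> (forall u, s <= u <= s + L -> g u <= eta) -> 2 * g s <= g (s + L)) ->
  exists ts, 0 <= ts /\ eta <= g ts.
Proof.
  intros HL Hg0 Hdouble. apply NNPP. intros Hno.
  assert (Hbelow : forall t, 0 <= t -> g t < eta).
  { intros t Ht. apply Rnot_le_lt. intros Hge. apply Hno. exists t. auto. }
  assert (Hpow : forall j : nat, 2 ^ j * g 0 <= g (INR j * L)).
  { induction j as [|j IH]; [simpl; rewrite Rmult_0_l; lra|].
    pose proof (pos_INR j).
    assert (2 * g (INR j * L) <= g (INR j * L + L)).
    { apply Hdouble; [nra|]. intros u Hu. apply Rlt_le, Hbelow. nra. }
    rewrite S_INR. replace ((INR j + 1) * L) with (INR j * L + L) by ring.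
    simpl. lra. }
  destruct (pow2_unbounded (g 0) eta Hg0) as [j Hj].
  pose proof (Hpow j). pose proof (pos_INR j).
  pose proof (Hbelow (INR j * L) ltac:(nra)). lra.
Qed.

(* After the last time [g] equals [eta], less than one window can elapse, during which
   [g] decays by a factor at most [exp (- c * L)]. *)
Lemma persistence_of_window_doubling g c eta L :
  0 <= c -> 0 < eta -> 0 < L -> 0 < g 0 ->
  (forall a b, 0 <= a -> cont_on g a b) ->
  (forall s t, 0 <= s <= t -> g s * exp (- c * (t - s)) <= g t) ->
  (forall s, 0 <= s -> (forall u, s <= u <= s + L -> g u <= eta) -> 2 * g s <= g (s + L)) ->
  exists ts, forall t, ts <= t -> eta * exp (- c * L) <= g t.
Proof.
  intros Hc Heta HL Hg0 Hcont Hdecay Hdouble.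
  destruct (reach_of_window_doubling g eta L HL Hg0 Hdouble) as [ts [Hts Hgts]].
  exists ts. intros t Ht.
  assert (HeL : exp (- c * L) <= 1) by (rewrite <- exp_0; apply exp_le; nra).
  destruct (Rle_or_lt eta (g t)) as [Hge|Hlt]; [nra|].
  destruct (last_crossing g ts t eta) as [s0 [Hs0 [Hgs0 Hafter]]];
    [destruct (Req_dec ts t) as [->|]; lra | apply Hcont, Hts | exact Hgts | exact Hlt |].
  destruct (Rle_or_lt (t - s0) L) as [Hshort|Hlong].
  - pose proof (Hdecay s0 t ltac:(lra)) as Hs0t. rewrite Hgs0 in Hs0t.
    assert (exp (- c * L) <= exp (- c * (t - s0))) by (apply exp_le; nra).
    nra.
  - exfalso.
    assert (2 * g s0 <= g (s0 + L)).
    { apply Hdouble; [lra|]. intros u Hu.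
      destruct (Req_dec u s0) as [->|]; [lra|]. apply Rlt_le, Hafter. lra. }
    pose proof (Hafter (s0 + L) ltac:(lra)). lra.
Qed.

(** * The SVIQS model *)

Section SVIQS.

Variables (n : nat) (p lam phi mu : nat -> R) (b d Phis beta gamma eta omega delta : R).

Hypothesis Hn : (1 <= n)%nat.
Hypothesis Hp : forall k, (1 <= k <= n)%nat -> 0 < p k.
Hypothesis Hb : 0 < b.
Hypothesis Hd : 0 < d.
Hypothesis HPhis : 0 < Phis.
Hypothesis Hlam : forall k, (1 <= k <= n)%nat -> 0 < lam k.
Hypothesis Hphi : forall k, (1 <= k <= n)%nat -> 0 < phi k.
Hypothesis Hmu : forall k, (1 <= k <= n)%nat -> 0 < mu k.
Hypothesis Hbeta : 0 < beta.
Hypothesis Hgamma : 0 < gamma.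
Hypothesis Heta : 0 < eta.
Hypothesis Homega : 0 < omega.
Hypothesis Hdelta : 0 <= delta <= 1.
Hypothesis HR0 : R0_SVIQS n p lam phi mu b d Phis beta gamma omega delta > 1.

Let N := Nstar b d Phis.
Let Ntot := sumk n N.
Let c := gamma + beta + d.
Let Cw := / avgk n p * sumk n (fun k => phi k * p k).
Let w k := lam k * phi k * p k.
Let Lsum := sumk n lam.
Let Msum := sumk n mu.

Lemma c_pos : 0 < c.
Proof. unfold c. lra. Qed.

Lemma avgk_pos : 0 < avgk n p.
Proof.
  apply sumk_pos; [exact Hn|]. intros k Hk.
  apply Rmult_lt_0_compat; [apply lt_0_INR; lia | apply Hp, Hk].
Qed.

Lemma Nstar_pos k : (1 <= k)%nat -> 0 < N k.
Proof.
  intros Hk. assert (0 < INR k) by (apply lt_0_INR; lia).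
  assert (0 < b * INR k * Phis) by (repeat apply Rmult_lt_0_compat; assumption).
  unfold N, Nstar. apply Rdiv_lt_0_compat; lra.
Qed.

Lemma Lam_Nstar k : (1 <= k)%nat -> Lam b d Phis k = d * N k.
Proof.
  intros Hk. assert (0 < INR k) by (apply lt_0_INR; lia).
  assert (0 < b * INR k * Phis) by (repeat apply Rmult_lt_0_compat; assumption).
  unfold Lam, N, Nstar. field. lra.
Qed.

Lemma Nstar_le_Ntot k : (1 <= k <= n)%nat -> N k <= Ntot.
Proof.
  intros Hk. apply sumk_term_le; [|exact Hk].
  intros j Hj. apply Rlt_le, Nstar_pos. lia.
Qed.

Lemma Cw_pos : 0 < Cw.
Proof.
  apply Rmult_lt_0_compat; [apply Rinv_0_lt_compat, avgk_pos|].
  apply sumk_pos; [exact Hn|]. intros k Hk. apply Rmult_lt_0_compat; auto.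
Qed.

Lemma lam_le_Lsum k : (1 <= k <= n)%nat -> lam k <= Lsum.
Proof. intros Hk. apply sumk_term_le; [intros; apply Rlt_le, Hlam|]; assumption. Qed.

Lemma mu_le_Msum k : (1 <= k <= n)%nat -> mu k <= Msum.
Proof. intros Hk. apply sumk_term_le; [intros; apply Rlt_le, Hmu|]; assumption. Qed.

Lemma Lsum_pos : 0 < Lsum.
Proof. apply sumk_pos; assumption. Qed.

Lemma Msum_pos : 0 < Msum.
Proof. apply sumk_pos; assumption. Qed.

Lemma Ntot_pos : 0 < Ntot.
Proof. apply sumk_pos; [exact Hn|]. intros k Hk. apply Nstar_pos. lia. Qed.

Let D k := omega + mu k + d.
(* The value of [F] at the disease-free equilibrium
   [S_k = (omega + d) N_k / D_k, V_k = mu_k N_k / D_k]; it equals [c * R0]. *)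
Let F0 := / avgk n p * sumk n (fun k => w k * (N k * (omega + d + delta * mu k) / D k)).
Let alpha := (F0 - c) / 2.
Let rho := 1 + beta / (eta + d).
Let K1 := / avgk n p * sumk n (fun k => w k * N k).
Let K2 := / avgk n p * sumk n (fun k => w k * (lam k * N k)).
(* Below the level [eta0] of [Theta], and after the transient [exp (- d * tau) <= eps1]
   has died out, the deficit of [F] with respect to [F0] is at most [alpha]. *)
Let eta0 := alpha * c / (2 * K2 * rho).
Let eps1 := alpha / (2 * K1 * (rho + 2)).
Let window tau := 2 * tau + (2 * c * tau + ln 2) / alpha.

Lemma F0_eq : F0 = c * R0_SVIQS n p lam phi mu b d Phis beta gamma omega delta.
Proof.
  unfold R0_SVIQS, F0. symmetry.
  rewrite (sumk_ext n _ (fun k => / c * (w k * (N k * (omega + d + delta * mu k) / D k)))).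
  - rewrite sumk_scal. unfold c. field. pose proof avgk_pos. split; lra.
  - intros k Hk. pose proof (Hmu k Hk). rewrite Lam_Nstar by lia. unfold w, D, c. field. lra.
Qed.

Lemma alpha_pos : 0 < alpha.
Proof. unfold alpha. rewrite F0_eq. unfold c. nra. Qed.

Lemma K1_pos : 0 < K1.
Proof.
  apply Rmult_lt_0_compat; [apply Rinv_0_lt_compat, avgk_pos|].
  apply sumk_pos; [exact Hn|]. intros k Hk. pose proof (Nstar_pos k ltac:(lia)).
  unfold w. pose proof (Hlam k Hk). pose proof (Hphi k Hk). pose proof (Hp k Hk).
  apply Rmult_lt_0_compat; [repeat apply Rmult_lt_0_compat|]; assumption.
Qed.

Lemma K2_pos : 0 < K2.
Proof.
  apply Rmult_lt_0_compat; [apply Rinv_0_lt_compat, avgk_pos|].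
  apply sumk_pos; [exact Hn|]. intros k Hk. pose proof (Nstar_pos k ltac:(lia)).
  unfold w. pose proof (Hlam k Hk). pose proof (Hphi k Hk). pose proof (Hp k Hk).
  apply Rmult_lt_0_compat; [repeat apply Rmult_lt_0_compat|]; [..|apply Rmult_lt_0_compat]; assumption.
Qed.

Lemma rho_gt_1 : 1 < rho.
Proof. unfold rho. assert (0 < beta / (eta + d)) by (apply Rdiv_lt_0_compat; lra). lra. Qed.

Lemma eta0_pos : 0 < eta0.
Proof.
  pose proof alpha_pos. pose proof K2_pos. pose proof rho_gt_1.
  unfold eta0, c. apply Rdiv_lt_0_compat; [apply Rmult_lt_0_compat|]; nra.
Qed.

Lemma eps1_pos : 0 < eps1.
Proof.
  pose proof alpha_pos. pose proof K1_pos. pose proof rho_gt_1.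
  unfold eps1. apply Rdiv_lt_0_compat; nra.
Qed.

Section Solution.

Variables S V I Q : nat -> R -> R.

Hypothesis Hsol : is_SVIQS_solution n p lam phi mu b d Phis beta gamma eta omega delta S V I Q.
Hypothesis Hinit : forall k, (1 <= k <= n)%nat ->
  0 <= S k 0 /\ 0 <= V k 0 /\ 0 <= I k 0 /\ 0 <= Q k 0 /\
  S k 0 + V k 0 + I k 0 + Q k 0 = N k.

Let Th := Theta n p phi I.
Let dS k t := Lam b d Phis k - lam k * S k t * Th t + gamma * I k t
              + eta * Q k t + omega * V k t - (mu k + d) * S k t.
Let dV k t := mu k * S k t - delta * lam k * V k t * Th t - (d + omega) * V k t.
Let dI k t := lam k * S k t * Th t + delta * lam k * V k t * Th t - c * I k t.
Let dQ k t := beta * I k t - (eta + d) * Q k t.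

Lemma solution_derivatives k t : (1 <= k <= n)%nat -> 0 < t ->
  derivable_pt_lim (S k) t (dS k t) /\ derivable_pt_lim (V k) t (dV k t) /\
  derivable_pt_lim (I k) t (dI k t) /\ derivable_pt_lim (Q k) t (dQ k t).
Proof. intros Hk Ht. destruct (Hsol k Hk) as [_ [_ [_ [_ H]]]]. exact (H t Ht). Qed.

Lemma solution_cont_on k a t : (1 <= k <= n)%nat -> 0 <= a ->
  cont_on (S k) a t /\ cont_on (V k) a t /\ cont_on (I k) a t /\ cont_on (Q k) a t.
Proof.
  intros Hk Ha. destruct (Hsol k Hk) as [HS [HV [HI [HQ _]]]].
  repeat split; apply cont_on_of_right_cont0; try assumption; intros s Hs;
    destruct (solution_derivatives k s Hk Hs) as [? [? [? ?]]]; eexists; eassumption.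
Qed.

(* The total population of each class obeys [N' = d (N_k^* - N)]. *)
Lemma conservation k t : (1 <= k <= n)%nat -> 0 <= t ->
  S k t + V k t + I k t + Q k t = N k.
Proof.
  intros Hk Ht.
  set (x := fun s => S k s + V k s + I k s + Q k s).
  destruct (solution_cont_on k 0 t Hk ltac:(lra)) as [CS [CV [CI CQ]]].
  assert (Hx : cont_on x 0 t) by (repeat apply cont_on_plus; assumption).
  assert (Hdx : forall s, 0 < s <= t -> derivable_pt_lim x s (d * (N k - x s))).
  { intros s Hs. destruct (solution_derivatives k s Hk ltac:(lra)) as [DS [DV [DI DQ]]].
    replace (d * (N k - x s)) with (dS k s + dV k s + dI k s + dQ k s)
      by (unfold dS, dV, dI, dQ, x, c; rewrite Lam_Nstar by lia; ring).
    repeat apply derivable_pt_lim_plus; assumption. }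
  destruct (Hinit k Hk) as [_ [_ [_ [_ Hx0]]]]. fold (x 0) in Hx0.
  pose proof (ode_upper_bound x _ d (N k) 0 t Ht Hx Hdx (fun s _ => Rle_refl _)) as Hup.
  pose proof (ode_lower_bound x _ d (N k) 0 t Ht Hx Hdx (fun s _ => Rle_refl _)) as Hlow.
  rewrite Hx0, Rminus_diag, Rmult_0_l, Rplus_0_r in Hup, Hlow. unfold x in *. lra.
Qed.

Let near_orthant t e := forall k, (1 <= k <= n)%nat ->
  - e <= S k t /\ - e <= V k t /\ - e <= I k t /\ - e <= Q k t.

Lemma near_orthant_upper t e k : 0 <= t -> e <= 1 -> near_orthant t e -> (1 <= k <= n)%nat ->
  S k t <= Ntot + 3 /\ V k t <= Ntot + 3 /\ I k t <= Ntot + 3 /\ Q k t <= Ntot + 3.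
Proof.
  intros Ht He Hnear Hk. pose proof (conservation k t Hk Ht).
  pose proof (Nstar_le_Ntot k Hk). destruct (Hnear k Hk) as [? [? [? ?]]]. lra.
Qed.

Lemma theta_near_orthant t e : 0 <= t -> e <= 1 -> near_orthant t e ->
  - (e * Cw) <= Th t <= (Ntot + 3) * Cw.
Proof.
  intros Ht He Hnear. pose proof (Rinv_0_lt_compat _ avgk_pos) as Hinv.
  assert (Hlow : sumk n (fun k => - e * (phi k * p k)) <= sumk n (fun k => phi k * p k * I k t)).
  { apply sumk_le. intros k Hk.
    pose proof (Rmult_lt_0_compat _ _ (Hphi k Hk) (Hp k Hk)).
    destruct (Hnear k Hk) as [_ [_ [? _]]]. nra. }
  assert (Hup : sumk n (fun k => phi k * p k * I k t) <= sumk n (fun k => (Ntot + 3) * (phi k * p k))).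
  { apply sumk_le. intros k Hk.
    pose proof (Rmult_lt_0_compat _ _ (Hphi k Hk) (Hp k Hk)).
    destruct (near_orthant_upper t e k Ht He Hnear Hk) as [_ [_ [? _]]]. nra. }
  rewrite sumk_scal in Hlow, Hup. unfold Th, Theta, Cw.
  apply (Rmult_le_compat_l (/ avgk n p)) in Hlow, Hup; lra.
Qed.

Lemma infection_lower t e k : 0 <= t -> 0 < e <= 1 -> near_orthant t e -> (1 <= k <= n)%nat ->
  - (Lsum * Cw * e) <= lam k * e * Th t.
Proof.
  intros Ht He Hnear Hk. pose proof (Hlam k Hk). pose proof (lam_le_Lsum k Hk). pose proof Cw_pos.
  pose proof (theta_near_orthant t e Ht (proj2 He) Hnear).
  assert (Hlow : lam k * e * (- (e * Cw)) <= lam k * e * Th t) by (apply Rmult_le_compat_l; nra).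
  assert (0 < lam k * Cw * e) by (apply Rmult_lt_0_compat; [apply Rmult_lt_0_compat|]; lra).
  assert (lam k * Cw * e <= Lsum * Cw * e) by (apply Rmult_le_compat_r; nra).
  replace (lam k * e * (- (e * Cw))) with (- ((lam k * Cw * e) * e)) in Hlow by ring.
  nra.
Qed.

Lemma dS_lower t e k : 0 <= t -> 0 < e <= 1 -> near_orthant t e -> (1 <= k <= n)%nat ->
  S k t = - e -> - ((Lsum * Cw + gamma + eta + omega) * e) <= dS k t.
Proof.
  intros Ht He Hnear Hk HS. unfold dS. rewrite HS, Lam_Nstar by lia.
  pose proof (Nstar_pos k ltac:(lia)). pose proof (Hmu k Hk). pose proof (infection_lower t e k Ht He Hnear Hk).
  destruct (Hnear k Hk) as [_ [? [? ?]]]. nra.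
Qed.

Lemma dV_lower t e k : 0 <= t -> 0 < e <= 1 -> near_orthant t e -> (1 <= k <= n)%nat ->
  V k t = - e -> - ((Msum + Lsum * Cw) * e) <= dV k t.
Proof.
  intros Ht He Hnear Hk HV. unfold dV. rewrite HV.
  pose proof (Hmu k Hk). pose proof (mu_le_Msum k Hk). pose proof (infection_lower t e k Ht He Hnear Hk).
  pose proof Cw_pos. pose proof Lsum_pos.
  destruct (Hnear k Hk) as [? _].
  assert (0 <= Lsum * Cw * e) by (apply Rmult_le_pos; [apply Rmult_le_pos|]; lra).
  assert (- (Lsum * Cw * e) <= delta * (lam k * e * Th t)) by nra.
  assert (- (Msum * e) <= mu k * S k t) by nra.
  nra.
Qed.

Lemma dI_lower t e k : 0 <= t -> 0 < e <= 1 -> near_orthant t e -> (1 <= k <= n)%nat ->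
  I k t = - e -> - (4 * Lsum * (Ntot + 3) * Cw * e) <= dI k t.
Proof.
  intros Ht He Hnear Hk HI. unfold dI, c. rewrite HI.
  pose proof (Hlam k Hk). pose proof (lam_le_Lsum k Hk). pose proof Cw_pos.
  pose proof (theta_near_orthant t e Ht (proj2 He) Hnear) as [Hlo Hhi].
  destruct (Hnear k Hk) as [HSe [HVe _]].
  destruct (near_orthant_upper t e k Ht (proj2 He) Hnear Hk) as [HSu [HVu _]].
  pose proof Ntot_pos.
  set (a := S k t + delta * V k t).
  assert (Ha : - (2 * e) <= a <= 2 * (Ntot + 3)) by (unfold a; nra).
  assert (Hprod : - (4 * (Ntot + 3) * Cw * e) <= a * Th t).
  { destruct (Rle_or_lt 0 (Th t)); [nra|].
    destruct (Rle_or_lt 0 a); nra. }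
  replace (lam k * S k t * Th t + delta * lam k * V k t * Th t) with (lam k * (a * Th t))
    by (unfold a; ring).
  assert (0 <= 4 * (Ntot + 3) * Cw * e) by (apply Rmult_le_pos; [nra|lra]).
  nra.
Qed.

Lemma dQ_lower t e k : 0 < e -> near_orthant t e -> (1 <= k <= n)%nat ->
  Q k t = - e -> - (beta * e) <= dQ k t.
Proof.
  intros He Hnear Hk HQ. unfold dQ. rewrite HQ. destruct (Hnear k Hk) as [_ [_ [? _]]].
  assert (0 <= (eta + d) * e) by (apply Rmult_le_pos; lra). nra.
Qed.

Let compartments := flat_map (fun k => [S k; V k; I k; Q k]) (seq 1 n).

Lemma In_compartments f : In f compartments <->
  exists k, (1 <= k <= n)%nat /\ (f = S k \/ f = V k \/ f = I k \/ f = Q k).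
Proof.
  unfold compartments. rewrite in_flat_map. split.
  - intros [k [Hk Hf]]. apply in_seq in Hk. exists k. split; [lia|].
    simpl in Hf. intuition.
  - intros [k [Hk Hf]]. exists k. split; [apply in_seq; lia|]. simpl. intuition.
Qed.

Lemma compartments_quasi_positive : exists K, 0 <= K /\
  forall f s e, In f compartments -> 0 < s -> 0 < e <= 1 ->
    (forall g, In g compartments -> - e <= g s) -> f s = - e ->
    exists l, derivable_pt_lim f s l /\ - (K * e) < l.
Proof.
  pose proof Cw_pos. pose proof Lsum_pos. pose proof Msum_pos. pose proof Ntot_pos.
  set (KS := Lsum * Cw + gamma + eta + omega). set (KV := Msum + Lsum * Cw).
  set (KI := 4 * Lsum * (Ntot + 3) * Cw).
  assert (0 <= Lsum * Cw) by (apply Rmult_le_pos; lra).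
  assert (0 <= KI) by (unfold KI; apply Rmult_le_pos; [apply Rmult_le_pos|]; nra).
  exists (KS + KV + KI + beta + 1). split; [unfold KS, KV; lra|].
  intros f s e Hf Hs He Hall Hfs.
  assert (Hnear : near_orthant s e).
  { intros j Hj. repeat split; apply Hall, In_compartments; exists j; auto. }
  assert (Hslack : forall C, 0 <= C <= KS + KV + KI + beta ->
            - ((KS + KV + KI + beta + 1) * e) < - (C * e)) by (intros; nra).
  apply In_compartments in Hf as [j [Hj Hf]].
  destruct (solution_derivatives j s Hj Hs) as [DS [DV [DI DQ]]].
  destruct Hf as [ -> | [ -> | [ -> | -> ]]]; eexists; (split; [eassumption|]);
    eapply Rlt_le_trans.
  - apply (Hslack KS). unfold KS, KV. lra.
  - exact (dS_lower s e j ltac:(lra) He Hnear Hj Hfs).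
  - apply (Hslack KV). unfold KS, KV. lra.
  - exact (dV_lower s e j ltac:(lra) He Hnear Hj Hfs).
  - apply (Hslack KI). unfold KS, KV. lra.
  - exact (dI_lower s e j ltac:(lra) He Hnear Hj Hfs).
  - apply (Hslack beta). unfold KS, KV. lra.
  - exact (dQ_lower s e j (proj1 He) Hnear Hj Hfs).
Qed.

Lemma nonnegativity k t : (1 <= k <= n)%nat -> 0 <= t ->
  0 <= S k t /\ 0 <= V k t /\ 0 <= I k t /\ 0 <= Q k t.
Proof.
  intros Hk Ht. destruct compartments_quasi_positive as [K [HK Hq]].
  assert (Hnonneg : forall f, In f compartments -> 0 <= f t).
  { apply (nonneg_invariant compartments K t HK); [| | intros; apply Hq; auto; lra | exact Ht].
    - intros f Hf. apply In_compartments in Hf as [j [Hj Hf]].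
      destruct (solution_cont_on j 0 t Hj ltac:(lra)) as [? [? [? ?]]].
      intuition (subst; assumption).
    - intros f Hf. apply In_compartments in Hf as [j [Hj Hf]].
      destruct (Hinit j Hj) as [? [? [? [? _]]]]. intuition (subst; assumption). }
  repeat split; apply Hnonneg, In_compartments; exists k; auto.
Qed.

Let F t := / avgk n p * sumk n (fun k => w k * (S k t + delta * V k t)).

Lemma theta_derivative t : 0 < t -> derivable_pt_lim Th t (Th t * (F t - c)).
Proof.
  intros Ht.
  assert (Hsum : derivable_pt_lim (fun s => sumk n (fun k => phi k * p k * I k s)) t
                   (sumk n (fun k => phi k * p k * dI k t))).
  { apply (derivable_pt_lim_sumk n (fun k s => phi k * p k * I k s)
             (fun k s => phi k * p k * dI k s)).
    intros k Hk. apply (derivable_pt_lim_scal (I k)).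
    apply (solution_derivatives k t Hk Ht). }
  replace (Th t * (F t - c)) with (/ avgk n p * sumk n (fun k => phi k * p k * dI k t)).
  - exact (derivable_pt_lim_scal _ (/ avgk n p) t _ Hsum).
  - rewrite (sumk_ext n _ (fun k => Th t * (w k * (S k t + delta * V k t))
                                    + (- c) * (phi k * p k * I k t)))
      by (intros; unfold dI, w; ring).
    rewrite sumk_add, !sumk_scal. unfold F, Th, Theta. ring.
Qed.

Lemma theta_nonneg t : 0 <= t -> 0 <= Th t.
Proof.
  intros Ht. apply Rmult_le_pos; [apply Rlt_le, Rinv_0_lt_compat, avgk_pos|].
  apply sumk_nonneg. intros k Hk. destruct (nonnegativity k t Hk Ht) as [_ [_ [? _]]].
  pose proof (Hp k Hk). pose proof (Hphi k Hk).
  apply Rmult_le_pos; [apply Rmult_le_pos|]; lra.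
Qed.

Lemma F_nonneg t : 0 <= t -> 0 <= F t.
Proof.
  intros Ht. apply Rmult_le_pos; [apply Rlt_le, Rinv_0_lt_compat, avgk_pos|].
  apply sumk_nonneg. intros k Hk. destruct (nonnegativity k t Hk Ht) as [? [? _]].
  pose proof (Hp k Hk). pose proof (Hphi k Hk). pose proof (Hlam k Hk).
  apply Rmult_le_pos; [unfold w; apply Rmult_le_pos; [apply Rmult_le_pos|] | ]; nra.
Qed.

Lemma theta_cont_on a t : 0 <= a -> cont_on Th a t.
Proof.
  intros Ha. apply (cont_on_mult (fun _ => / avgk n p)); [apply cont_on_const|].
  apply (cont_on_sumk n (fun k s => phi k * p k * I k s)). intros k Hk.
  apply (cont_on_mult (fun _ => phi k * p k)); [apply cont_on_const|].
  apply (solution_cont_on k a t Hk Ha).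
Qed.

(* From [Theta' = Theta (F - c)] and [Theta >= 0]. *)
Lemma theta_growth r s t : 0 <= s <= t -> (forall u, s < u <= t -> c + r <= F u) ->
  Th s * exp (r * (t - s)) <= Th t.
Proof.
  intros Hst HF.
  pose proof (ode_lower_bound Th (fun u => Th u * (F u - c)) (- r) 0 s t (proj2 Hst)
    (theta_cont_on s t (proj1 Hst)) (fun u Hu => theta_derivative u ltac:(lra))
    (fun u Hu => ltac:(pose proof (theta_nonneg u ltac:(lra)); pose proof (HF u Hu); nra)))
    as Hlow.
  replace (- - r) with r in Hlow by ring. lra.
Qed.

Lemma theta_decay s t : 0 <= s <= t -> Th s * exp (- c * (t - s)) <= Th t.
Proof.
  intros Hst. apply theta_growth; [exact Hst|].
  intros u Hu. pose proof (F_nonneg u ltac:(lra)). lra.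
Qed.

Lemma theta_pos_at_0 : 0 < Itot n p I 0 -> 0 < Th 0.
Proof.
  intros HI. destruct (sumk_pos_term n _ HI) as [k [Hk HIk]].
  pose proof (Hp k Hk). pose proof (Hphi k Hk).
  assert (0 < I k 0) by nra.
  apply Rmult_lt_0_compat; [apply Rinv_0_lt_compat, avgk_pos|].
  eapply Rlt_le_trans; [|apply (sumk_term_le n (fun k => phi k * p k * I k 0) k)].
  - apply Rmult_lt_0_compat; [apply Rmult_lt_0_compat|]; assumption.
  - intros j Hj. destruct (nonnegativity j 0 Hj (Rle_refl 0)) as [_ [_ [? _]]].
    pose proof (Hp j Hj). pose proof (Hphi j Hj). apply Rmult_le_pos; [apply Rmult_le_pos|]; lra.
  - exact Hk.
Qed.

Lemma Itot_ge_theta t : 0 <= t -> avgk n p * Th t / sumk n phi <= Itot n p I t.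
Proof.
  intros Ht. pose proof avgk_pos.
  assert (Hphis : 0 < sumk n phi) by (apply sumk_pos; assumption).
  assert (avgk n p * Th t <= sumk n phi * Itot n p I t).
  { unfold Th, Theta, Itot. rewrite <- Rmult_assoc, Rinv_r, Rmult_1_l by lra.
    rewrite <- sumk_scal. apply sumk_le. intros k Hk.
    destruct (nonnegativity k t Hk Ht) as [_ [_ [? _]]].
    assert (phi k <= sumk n phi) by (apply sumk_term_le; [intros; apply Rlt_le, Hphi|]; assumption).
    pose proof (Hp k Hk). pose proof (Hphi k Hk). assert (0 <= p k * I k t) by nra. nra. }
  unfold Rdiv. apply (Rmult_le_reg_r (sumk n phi)); [exact Hphis|].
  rewrite Rmult_assoc, Rinv_l, Rmult_1_r by lra. lra.
Qed.

Section Window.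

Variables (tau t0 t1 : R).
Hypothesis Htau : 0 < tau.
Hypothesis Htau_eps : exp (- d * tau) <= eps1.
Hypothesis Ht0 : 0 <= t0.
Hypothesis Hsmall : forall u, t0 <= u <= t1 -> Th u <= eta0.

Lemma V_upper k u : (1 <= k <= n)%nat -> t0 + tau <= u <= t1 ->
  V k u <= mu k * N k / D k + N k * eps1.
Proof.
  intros Hk Hu. pose proof (Hmu k Hk). pose proof (Hlam k Hk).
  assert (HD : 0 < D k) by (unfold D; lra).
  apply (ode_upper_bound_after (V k) (dV k) (D k) d _ t0 u tau); try lra.
  - unfold D; lra.
  - destruct (nonnegativity k t0 Hk Ht0) as [? [? [? ?]]]. pose proof (conservation k t0 Hk Ht0).
    assert (0 <= mu k * N k / D k) by (apply Rmult_le_pos; [apply Rmult_le_pos | apply Rlt_le, Rinv_0_lt_compat]; lra).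
    lra.
  - apply Rlt_le, Nstar_pos. lia.
  - apply (solution_cont_on k t0 u Hk Ht0).
  - intros s Hs. apply (solution_derivatives k s Hk). lra.
  - intros s Hs. destruct (nonnegativity k s Hk ltac:(lra)) as [? [? [? ?]]].
    pose proof (conservation k s Hk ltac:(lra)). pose proof (theta_nonneg s ltac:(lra)).
    assert (0 <= delta * lam k * V k s * Th s) by
      (apply Rmult_le_pos; [apply Rmult_le_pos; [apply Rmult_le_pos|]|]; lra).
    replace (D k * (mu k * N k / D k - V k s)) with (mu k * N k - D k * V k s) by (field; lra).
    unfold dV, D. nra.
Qed.

Lemma I_upper k u : (1 <= k <= n)%nat -> t0 + tau <= u <= t1 ->
  I k u <= lam k * N k * eta0 / c + N k * eps1.
Proof.
  intros Hk Hu. pose proof (Hlam k Hk). pose proof (Nstar_pos k ltac:(lia)). pose proof eta0_pos.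
  pose proof c_pos as Hc.
  assert (0 <= lam k * N k * eta0 / c) by
    (apply Rmult_le_pos; [apply Rmult_le_pos; [apply Rmult_le_pos|] | apply Rlt_le, Rinv_0_lt_compat]; lra).
  apply (ode_upper_bound_after (I k) (dI k) c d _ t0 u tau); try lra.
  - unfold c; lra.
  - destruct (nonnegativity k t0 Hk Ht0) as [? [? [? ?]]]. pose proof (conservation k t0 Hk Ht0). lra.
  - apply (solution_cont_on k t0 u Hk Ht0).
  - intros s Hs. apply (solution_derivatives k s Hk). lra.
  - intros s Hs. destruct (nonnegativity k s Hk ltac:(lra)) as [? [? [? ?]]].
    pose proof (conservation k s Hk ltac:(lra)).
    pose proof (theta_nonneg s ltac:(lra)). pose proof (Hsmall s ltac:(lra)).
    assert (Hsv : 0 <= S k s + delta * V k s <= N k) by nra.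
    assert ((S k s + delta * V k s) * Th s <= N k * eta0) by (apply Rmult_le_compat; lra).
    replace (c * (lam k * N k * eta0 / c - I k s)) with (lam k * (N k * eta0) - c * I k s)
      by (field; lra).
    unfold dI. nra.
Qed.

Lemma Q_upper k u : (1 <= k <= n)%nat -> t0 + 2 * tau <= u <= t1 ->
  Q k u <= beta * (lam k * N k * eta0 / c + N k * eps1) / (eta + d) + N k * eps1.
Proof.
  intros Hk Hu. pose proof (Hlam k Hk). pose proof (Nstar_pos k ltac:(lia)).
  pose proof eta0_pos. pose proof eps1_pos.
  pose proof c_pos as Hc.
  set (B := lam k * N k * eta0 / c + N k * eps1).
  assert (0 <= B) by (unfold B; apply Rplus_le_le_0_compat;
    [apply Rmult_le_pos; [apply Rmult_le_pos; [apply Rmult_le_pos|] | apply Rlt_le, Rinv_0_lt_compat]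
    | apply Rmult_le_pos]; lra).
  assert (0 <= beta * B / (eta + d)) by
    (apply Rmult_le_pos; [apply Rmult_le_pos | apply Rlt_le, Rinv_0_lt_compat]; lra).
  apply (ode_upper_bound_after (Q k) (dQ k) (eta + d) d _ (t0 + tau) u tau); try lra.
  - destruct (nonnegativity k (t0 + tau) Hk ltac:(lra)) as [? [? [? ?]]].
    pose proof (conservation k (t0 + tau) Hk ltac:(lra)). lra.
  - apply (solution_cont_on k (t0 + tau) u Hk ltac:(lra)).
  - intros s Hs. apply (solution_derivatives k s Hk). lra.
  - intros s Hs. pose proof (I_upper k s Hk ltac:(lra)) as HI. fold B in HI.
    replace ((eta + d) * (beta * B / (eta + d) - Q k s)) with (beta * B - (eta + d) * Q k s)
      by (field; lra).
    unfold dQ. nra.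
Qed.

Lemma susceptible_lower k u : (1 <= k <= n)%nat -> t0 + 2 * tau <= u <= t1 ->
  N k * (omega + d + delta * mu k) / D k
  - (rho * (eta0 / c) * (lam k * N k) + (rho + 2) * eps1 * N k) <= S k u + delta * V k u.
Proof.
  intros Hk Hu. pose proof (Hmu k Hk). pose proof (Nstar_pos k ltac:(lia)). pose proof eps1_pos.
  pose proof c_pos as Hc.
  pose proof (V_upper k u Hk ltac:(lra)) as HV. pose proof (I_upper k u Hk ltac:(lra)) as HI.
  pose proof (Q_upper k u Hk Hu) as HQ.
  destruct (nonnegativity k u Hk ltac:(lra)) as [? [? [? ?]]].
  pose proof (conservation k u Hk ltac:(lra)).
  assert (0 <= N k * eps1) by (apply Rmult_le_pos; lra).
  assert ((1 - delta) * (V k u - mu k * N k / D k) <= N k * eps1) by nra.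
  replace (N k * (omega + d + delta * mu k) / D k) with (N k - (1 - delta) * (mu k * N k / D k))
    by (unfold D; field; lra).
  replace (rho * (eta0 / c) * (lam k * N k) + (rho + 2) * eps1 * N k)
    with (rho * (lam k * N k * eta0 / c + N k * eps1) + 2 * (N k * eps1))
    by (field; lra).
  replace (beta * (lam k * N k * eta0 / c + N k * eps1) / (eta + d))
    with ((rho - 1) * (lam k * N k * eta0 / c + N k * eps1)) in HQ by (unfold rho; field; lra).
  lra.
Qed.

Lemma F_lower u : t0 + 2 * tau <= u <= t1 -> c + alpha <= F u.
Proof.
  intros Hu. pose proof avgk_pos. pose proof alpha_pos. pose proof K1_pos. pose proof K2_pos.
  pose proof rho_gt_1. pose proof c_pos as Hc.
  assert (Hsum : sumk n (fun k => w k * (N k * (omega + d + delta * mu k) / D k)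
                   + (- (rho * (eta0 / c))) * (w k * (lam k * N k))
                   + (- ((rho + 2) * eps1)) * (w k * N k))
                 <= sumk n (fun k => w k * (S k u + delta * V k u))).
  { apply sumk_le. intros k Hk. pose proof (susceptible_lower k u Hk Hu).
    assert (0 < w k) by (unfold w; pose proof (Hlam k Hk); pose proof (Hphi k Hk);
                         pose proof (Hp k Hk); repeat apply Rmult_lt_0_compat; assumption).
    apply Rle_trans with (w k * (N k * (omega + d + delta * mu k) / D k
      - (rho * (eta0 / c) * (lam k * N k) + (rho + 2) * eps1 * N k))); [lra|].
    apply Rmult_le_compat_l; lra. }
  rewrite !sumk_add, !sumk_scal in Hsum.
  apply (Rmult_le_compat_l (/ avgk n p)) in Hsum; [|apply Rlt_le, Rinv_0_lt_compat; lra].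
  assert (E2 : rho * (eta0 / c) * K2 = alpha / 2) by (unfold eta0; field; repeat split; lra).
  assert (E1 : (rho + 2) * eps1 * K1 = alpha / 2) by (unfold eps1; field; repeat split; lra).
  unfold K1, K2 in E1, E2. unfold F. unfold alpha, F0 in *. nra.
Qed.

End Window.

(* Over a window of length [window tau] the decay during the transient [2 * tau] is
   exactly compensated by [ln 2] worth of growth at rate [alpha]. *)
Lemma window_doubling tau t0 : 0 < tau -> exp (- d * tau) <= eps1 -> 0 <= t0 ->
  (forall u, t0 <= u <= t0 + window tau -> Th u <= eta0) ->
  2 * Th t0 <= Th (t0 + window tau).
Proof.
  intros Htau Heps Ht0 Hsmall. pose proof alpha_pos.
  pose proof c_pos as Hc.
  assert (Hlen : 0 < (2 * c * tau + ln 2) / alpha).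
  { apply Rdiv_lt_0_compat; [|lra]. pose proof ln_lt_2. nra. }
  assert (Hexp : exp (- c * (t0 + 2 * tau - t0)) * exp (alpha * (t0 + window tau - (t0 + 2 * tau))) = 2).
  { rewrite <- exp_plus. unfold window.
    replace (- c * (t0 + 2 * tau - t0) + alpha * (t0 + (2 * tau + (2 * c * tau + ln 2) / alpha)
               - (t0 + 2 * tau))) with (ln 2) by (field; lra).
    apply exp_ln. lra. }
  pose proof (theta_decay t0 (t0 + 2 * tau) ltac:(lra)) as Hdecay.
  pose proof (theta_growth alpha (t0 + 2 * tau) (t0 + window tau) ltac:(unfold window; lra)
    (fun u Hu => F_lower tau t0 (t0 + window tau) Htau Heps Ht0 Hsmall u ltac:(lra))) as Hgrowth.
  pose proof (theta_nonneg t0 Ht0).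
  pose proof (exp_pos (alpha * (t0 + window tau - (t0 + 2 * tau)))).
  apply Rmult_le_compat_r with (r := exp (alpha * (t0 + window tau - (t0 + 2 * tau)))) in Hdecay;
    [|lra].
  rewrite Rmult_assoc, Hexp in Hdecay. lra.
Qed.

End Solution.

Lemma uniform_persistence : exists eps, 0 < eps /\
  forall S V I Q : nat -> R -> R,
    is_SVIQS_solution n p lam phi mu b d Phis beta gamma eta omega delta S V I Q ->
    (forall k, (1 <= k <= n)%nat ->
       0 <= S k 0 /\ 0 <= V k 0 /\ 0 <= I k 0 /\ 0 <= Q k 0 /\
       S k 0 + V k 0 + I k 0 + Q k 0 = Nstar b d Phis k) ->
    Itot n p I 0 > 0 ->
    exists T, forall t, T <= t -> eps <= Itot n p I t.
Proof.
  destruct (exp_small d eps1 Hd eps1_pos) as [tau [Htau Heps]].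
  pose proof avgk_pos. pose proof eta0_pos. pose proof alpha_pos.
  assert (Hphis : 0 < sumk n phi) by (apply sumk_pos; assumption).
  assert (Hc : 0 <= c) by (apply Rlt_le, c_pos).
  assert (HL : 0 < window tau).
  { unfold window. assert (0 < (2 * c * tau + ln 2) / alpha); [|lra].
    apply Rdiv_lt_0_compat; [pose proof ln_lt_2; nra | lra]. }
  exists (avgk n p * (eta0 * exp (- c * window tau)) / sumk n phi). split.
  { apply Rdiv_lt_0_compat; [apply Rmult_lt_0_compat; [|apply Rmult_lt_0_compat, exp_pos]|]; lra. }
  intros S V I Q Hsol Hinit HI0.
  destruct (persistence_of_window_doubling (Theta n p phi I) c eta0 (window tau) Hc eta0_pos HL
    (theta_pos_at_0 S V I Q Hsol Hinit HI0) (theta_cont_on S V I Q Hsol)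
    (theta_decay S V I Q Hsol Hinit) (fun t0 Ht0 => window_doubling S V I Q Hsol Hinit tau t0 Htau Heps Ht0))
    as [ts Hts].
  exists (Rmax ts 0). intros t Ht.
  pose proof (Rmax_l ts 0). pose proof (Rmax_r ts 0).
  eapply Rle_trans; [|apply (Itot_ge_theta S V I Q Hsol Hinit t ltac:(lra))].
  unfold Rdiv. apply Rmult_le_compat_r; [apply Rlt_le, Rinv_0_lt_compat; lra|].
  apply Rmult_le_compat_l; [lra|]. apply Hts. lra.
Qed.

End SVIQS.

Theorem theorem4p9
  (n : nat) (p : nat -> R) (b d Phis : R)
  (lam phi mu : nat -> R) (beta gamma eta omega delta : R)
  (Hn : (1 <= n)%nat)
  (Hp : forall k, (1 <= k <= n)%nat -> 0 < p k)
  (Hpsum : sumk n p = 1)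
  (Hbd : b > d) (Hd : d > 0)
  (HPhis : Phis > 0)
  (HPhieq : Phis = / avgk n p *
                   sumk n (fun i => INR i * p i * b * Phis / (d + b * INR i * Phis)))
  (Hlam : forall k, (1 <= k <= n)%nat -> 0 < lam k)
  (Hphi : forall k, (1 <= k <= n)%nat -> 0 < phi k)
  (Hmu : forall k, (1 <= k <= n)%nat -> 0 < mu k)
  (Hbeta : 0 < beta) (Hgamma : 0 < gamma) (Heta : 0 < eta) (Homega : 0 < omega)
  (Hdelta : 0 <= delta <= 1)
  (HR0 : R0_SVIQS n p lam phi mu b d Phis beta gamma omega delta > 1) :
  exists eps, 0 < eps /\
    forall S V I Q : nat -> R -> R,
      is_SVIQS_solution n p lam phi mu b d Phis beta gamma eta omega delta S V I Q ->
      (forall k, (1 <= k <= n)%nat ->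
         0 <= S k 0 /\ 0 <= V k 0 /\ 0 <= I k 0 /\ 0 <= Q k 0 /\
         S k 0 + V k 0 + I k 0 + Q k 0 = Nstar b d Phis k) ->
      Itot n p I 0 > 0 ->
      forall eta', 0 < eta' -> exists T, forall t, T <= t -> Itot n p I t >= eps - eta'.
Proof.
  destruct (uniform_persistence n p lam phi mu b d Phis beta gamma eta omega delta
              Hn Hp ltac:(lra) Hd HPhis Hlam Hphi Hmu Hbeta Hgamma Heta Homega Hdelta HR0)
    as [eps [Heps Hpers]].
  exists eps. split; [exact Heps|].
  intros S V I Q Hsol Hinit HI0 eta' Heta'.
  destruct (Hpers S V I Q Hsol Hinit HI0) as [T HT].
  exists T. intros t Ht. specialize (HT t Ht). lra.
Qed.
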